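(* Let $V$ be a vertex operator algebra and let $h\in V$ satisfy $L(n)h=\delta_{n,0}h$ and $h_nh=\delta_{n,1}\gamma\mathbf 1$ for all integers $n\ge0$, with $\gamma\in\mathbb Q$. Then, as operators on $V$ (formal power series in $z$), $$e^{z(L(1)-h(1))}e^{-zL(1)}=\exp\Big(\sum_{k=1}^{\infty}\frac{h(k)}{k}(-z)^{k}\Big),\qquad e^{z(L(-1)+h(-1))}e^{-zL(-1)}=\exp\Big(\sum_{k=1}^{\infty}\frac{h(-k)}{k}z^{k}\Big).$$
   Context: $Y(h,z)=\sum_{n\in\mathbb Z}h(n)z^{-n-1}$ and $Y(\omega,z)=\sum_{n\in\mathbb Z}L(n)z^{-n-2}$, where $\omega$ is the Virasoro element of $V$. *)

(* Vertex operator algebras are not in any library: we define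
   them here (Frenkel-Lepowsky-Meurman / Lepowsky-Li definition, with the
   Jacobi identity in its equivalent component (Borcherds) form). *)
From HB Require Import structures.
From mathcomp Require Import all_boot all_order all_algebra.
Set Implicit Arguments. Unset Strict Implicit. Unset Printing Implicit Defensive.
Import Order.TTheory GRing.Theory Num.Theory.
Local Open Scope ring_scope.

Section VOA.
Variable K : fieldType.
Variable V : lmodType K.

Definition binz (r : int) (i : nat) : K :=
  (\prod_(j < i) (r - j%:Z)%:~R) / (i`!)%:R.

(* Y : V -> int -> V -> V with  Y(u,z) = sum_n (Y u n) z^{-n-1},
   i.e. Y u n is the mode u_n. *)
Record is_VOA (Y : V -> int -> V -> V) (vac omega : V) (c : K) : Prop := {
  Y_linl : forall (a : K) u u' n w,
      Y (a *: u + u') n w = a *: Y u n w + Y u' n w;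
  Y_linr : forall u n (a : K) w w',
      Y u n (a *: w + w') = a *: Y u n w + Y u n w';
  Y_trunc : forall u v, exists N : int, forall n, N <= n -> Y u n v = 0;
  Y_vac : forall n v, Y vac n v = if n == (-1)%R then v else 0;
  Y_creation : forall u, (forall n : int, 0 <= n -> Y u n vac = 0)
                         /\ Y u (-1) vac = u;
  Y_borcherds : forall u v w (p q r : int), exists N : nat, forall M : nat,
      (N <= M)%N ->
      \sum_(i < M) binz p i *: Y (Y u (r + i%:Z) v) (p + q - i%:Z) w =
      \sum_(i < M) ((-1) ^+ i * binz r i) *:
          (Y u (p + r - i%:Z) (Y v (q + i%:Z) w)
           - (-1) ^+ `|r|%N *: Y v (q + r - i%:Z) (Y u (p + i%:Z) w));
  (* L(n) := omega_{n+1} *)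
  Y_virasoro : forall (m n : int) w,
      Y omega (m + 1) (Y omega (n + 1) w) - Y omega (n + 1) (Y omega (m + 1) w)
      = (m - n)%:~R *: Y omega (m + n + 1) w
        + (if m + n == 0 then ((m ^+ 3 - m)%:~R / 12%:R * c) *: w else 0);
  Y_Lm1 : forall u n w, Y (Y omega 0 u) n w = (- n)%:~R *: Y u (n - 1) w;
  Y_grading : forall v, exists s : seq (int * V),
      all (fun p => Y omega 1 p.2 == p.1%:~R *: p.2) s /\ v = \sum_(p <- s) p.2;
  Y_findim : forall n : int, exists s : seq V, forall v,
      Y omega 1 v = n%:~R *: v -> exists a : nat -> K,
        v = \sum_(i < size s) a i *: s`_i;
  Y_bounded : exists N : int, forall (n : int) v,
      n < N -> Y omega 1 v = n%:~R *: v -> v = 0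
}.

(* Formal power series in z with coefficients in operators V -> V:
   f is the series  sum_n (f n) z^n. *)
Definition fps := nat -> V -> V.
Definition fmul (f g : fps) : fps :=
  fun n v => \sum_(i < n.+1) f i (g (n - i)%N v).
Definition fone : fps := fun n v => if n == 0%N then v else 0.
Definition fpow (f : fps) (m : nat) : fps := iter m (fmul f) fone.
(* exponential of a series with zero constant term *)
Definition fexp (f : fps) : fps :=
  fun n v => \sum_(m < n.+1) ((m`!)%:R^-1 : K) *: fpow f m n v.
(* the series  z A *)
Definition zop (A : V -> V) : fps := fun n v => if n == 1%N then A v else 0.
End VOA.

From HB Require Import structures.
From mathcomp Require Import all_boot all_order all_algebra.
From mathcomp Require Import zify ring.
Set Implicit Arguments. Unset Strict Implicit. Unset Printing Implicit Defensive.
Import Order.TTheory GRing.Theory Num.Theory.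
Local Open Scope ring_scope.

(* For operator-valued series X(z) put D X = X' - [T, X]. By the Leibniz rule,
   P(z) = e^{z(T + S)} e^{-zT} satisfies D P = S P, and so does exp c(z) as soon
   as D c = S and S commutes with the coefficients of c. Since D X = S X with
   X(0) = 1 determines X coefficientwise, P = exp c. For T = L(1), S = -h(1) and
   T = L(-1), S = h(-1), the condition D c = S on c(z) = sum_k h(k)(-z)^k / k,
   resp. sum_k h(-k) z^k / k, is the commutator formula [L(m), h(n)] = -n h(m + n), and S commutes with
   the coefficients of c since, by h_n h = delta_{n,1} gamma 1, the modes h(p)
   and h(q) commute unless p + q = 0. *)

Section LinearMaps.
Variables (K : numFieldType) (V : lmodType K).

Definition linear_of (f : V -> V) (lf : linear f) : {linear V -> V} :=
  HB.pack f (GRing.isLinear.Build K V V *:%R f lf).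

Section Facts.
Variables (f : V -> V) (lf : linear f).
Lemma lin0 : f 0 = 0. Proof. exact: raddf0 (linear_of lf). Qed.
Lemma linZ a x : f (a *: x) = a *: f x. Proof. exact: linearZZ (linear_of lf) a x. Qed.
Lemma linN x : f (- x) = - f x. Proof. exact: raddfN (linear_of lf) x. Qed.
Lemma linB x y : f (x - y) = f x - f y. Proof. exact: raddfB (linear_of lf) x y. Qed.
Lemma lin_sum (I : Type) (r : seq I) (P : pred I) (F : I -> V) :
  f (\sum_(i <- r | P i) F i) = \sum_(i <- r | P i) f (F i).
Proof. exact: raddf_sum (linear_of lf) I r P F. Qed.
End Facts.

Lemma linearD (f g : V -> V) : linear f -> linear g -> linear (fun w => f w + g w).
Proof. by move=> lf lg a x y; rewrite lf lg scalerDr addrACA. Qed.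
Lemma linearNf (f : V -> V) : linear f -> linear (fun w => - f w).
Proof. by move=> lf a x y; rewrite lf opprD scalerN. Qed.
Lemma linearZf (f : V -> V) b : linear f -> linear (fun w => b *: f w).
Proof. by move=> lf a x y; rewrite lf scalerDr !scalerA mulrC. Qed.
Lemma linear_iter (f : V -> V) n : linear f -> linear (iter n f).
Proof. by move=> lf; elim: n => [|n IH] a x y //=; rewrite IH lf. Qed.

End LinearMaps.

Section FormalSeries.
Variables (K : numFieldType) (V : lmodType K).
Implicit Types (f g : fps V) (T : V -> V).

Lemma fmulBl f f' g n v :
  fmul (fun i w => f i w - f' i w) g n v = fmul f g n v - fmul f' g n v.
Proof. by rewrite /fmul -sumrB. Qed.

Lemma fmulBr f g g' n v : (forall i, linear (f i)) ->
  fmul f (fun i w => g i w - g' i w) n v = fmul f g n v - fmul f g' n v.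
Proof. by move=> lf; rewrite /fmul -sumrB; apply: eq_bigr => i _; rewrite linB. Qed.

Lemma linear_fmul f g n : (forall i, linear (f i)) -> (forall i, linear (g i)) ->
  linear (fmul f g n).
Proof.
move=> lf lg a x y; rewrite /fmul scaler_sumr -big_split.
by apply: eq_bigr => i _ /=; rewrite lg lf.
Qed.

Definition fderiv f : fps V := fun n v => n.+1%:R *: f n.+1 v.
Definition fbracket T f : fps V := fun n v => T (f n v) - f n (T v).
Definition ad_deriv T f : fps V := fun n v => fderiv f n v - fbracket T f n v.

Lemma fderiv_fmul f g n v : (forall i, linear (f i)) ->
  fderiv (fmul f g) n v = fmul (fderiv f) g n v + fmul f (fderiv g) n v.
Proof.
move=> lf; rewrite /fderiv /fmul scaler_sumr.
transitivity (\sum_(i < n.+2) (i%:R *: f i (g (n.+1 - i)%N v)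
                              + (n.+1 - i)%N%:R *: f i (g (n.+1 - i)%N v))).
  by apply: eq_bigr => i _; rewrite -scalerDl -natrD subnKC // -ltnS.
rewrite big_split /=; congr (_ + _).
  by rewrite big_ord_recl /= scale0r add0r.
rewrite big_ord_recr /= subnn scale0r addr0; apply: eq_bigr => i _ /=.
by rewrite subSn ?(linZ (lf _)) // -ltnS.
Qed.

Lemma fbracket_fmul T f g n v : linear T -> (forall i, linear (f i)) ->
  fbracket T (fmul f g) n v = fmul (fbracket T f) g n v + fmul f (fbracket T g) n v.
Proof.
move=> lT lf; rewrite fmulBl fmulBr // /fbracket /fmul (lin_sum lT).
by rewrite addrA subrK.
Qed.

Lemma ad_deriv_fmul T f g n v : linear T -> (forall i, linear (f i)) ->
  ad_deriv T (fmul f g) n v = fmul (ad_deriv T f) g n v + fmul f (ad_deriv T g) n v.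
Proof.
move=> lT lf; rewrite /ad_deriv fmulBl fmulBr // fderiv_fmul // fbracket_fmul //.
by rewrite opprD addrACA.
Qed.

Lemma ad_deriv_fone T n v : linear T -> ad_deriv T (@fone K V) n v = 0.
Proof.
move=> lT; rewrite /ad_deriv /fderiv /fbracket /fone /= scaler0 sub0r.
by case: n => [|n] /=; rewrite ?subrr ?(lin0 lT) ?subr0 oppr0.
Qed.

Lemma fpow_lt f m n v : (forall w, f 0%N w = 0) -> (forall i, linear (f i)) ->
  (n < m)%N -> fpow f m n v = 0.
Proof.
move=> f0 lf; elim: m n v => [//|m IH] n v ltnm.
rewrite /fpow iterS -/(fpow f m) /fmul big1 // => -[[|i] lti] _ /=.
  by rewrite f0.
by rewrite IH ?lin0 //; lia.
Qed.

Lemma fact_invS m : ((m.+1)`!%:R : K)^-1 * m.+1%:R = (m`!%:R)^-1.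
Proof. by rewrite factS natrM invfM mulrAC mulVf ?mul1r // pnatr_eq0. Qed.

Section ExpOfSeries.
Variables (T S : V -> V) (c : fps V).
Hypotheses (lT : linear T) (lS : linear S) (lc : forall i, linear (c i)).
Hypotheses (c0 : forall w, c 0%N w = 0) (cS : forall i w, S (c i w) = c i (S w)).
Hypothesis ad_deriv_c : forall n w, ad_deriv T c n w = if n == 0%N then S w else 0.

(* The power rule: S commutes with c, so every c^j S c^(m-1-j) equals S c^(m-1). *)
Lemma ad_deriv_fpow m n v : ad_deriv T (fpow c m) n v = m%:R *: S (fpow c m.-1 n v).
Proof.
elim: m n v => [|m IH] n v; first by rewrite scale0r ad_deriv_fone.
rewrite /fpow iterS -!/(fpow c _) ad_deriv_fmul //.
rewrite [fmul (ad_deriv _ _) _ _ _]/fmul big_ord_recl ad_deriv_c /= subn0 big1 ?addr0 //.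
have -> : fmul c (ad_deriv T (fpow c m)) n v = m%:R *: S (fpow c m n v).
  case: m IH => [|m] IH.
    by rewrite scale0r /fmul big1 // => i _; rewrite IH scale0r lin0.
  rewrite /fpow iterS -/(fpow c m) /fmul (lin_sum lS) scaler_sumr.
  by apply: eq_bigr => i _; rewrite IH linZ // cS.
by rewrite -[m.+1]addn1 natrD scalerDl scale1r addrC.
Qed.

Lemma ad_deriv_fexp n v : ad_deriv T (fexp c) n v = S (fexp c n v).
Proof.
have fexp_ext w : fexp c n w = \sum_(m < n.+2) ((m`!)%:R^-1 : K) *: fpow c m n w.
  by rewrite [RHS]big_ord_recr (fpow_lt (m := n.+1)) // scaler0 /= addr0.
rewrite /ad_deriv /fderiv /fbracket !fexp_ext.
transitivity (\sum_(m < n.+2) ((m`!)%:R^-1 : K) *: ad_deriv T (fpow c m) n v).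
  rewrite (lin_sum lT) scaler_sumr -!sumrB; apply: eq_bigr => m _.
  by rewrite /ad_deriv /fderiv /fbracket (linZ lT) !scalerBr !scalerA [_ * _]mulrC.
rewrite (lin_sum lS) big_ord_recl ad_deriv_fpow scale0r scaler0 add0r.
rewrite [RHS]big_ord_recr (fpow_lt (m := n.+1)) // scaler0 (lin0 lS) /= addr0.
apply: eq_bigr => m _; rewrite /bump /= add0n (ad_deriv_fpow m.+1).
by rewrite scalerA fact_invS (linZ lS).
Qed.

End ExpOfSeries.
End FormalSeries.

Section ExpOfOperator.
Variables (K : numFieldType) (V : lmodType K) (A : V -> V).
Hypothesis lA : linear A.

Lemma fpow_zop m n v : fpow (zop A) m n v = if n == m then iter m A v else 0.
Proof.
elim: m n v => [//|m IH] [|n] v; rewrite /fpow iterS -/(fpow _ m) /fmul.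
  by rewrite big_ord1.
rewrite big_ord_recl big_ord_recl big1 ?addr0 // /= add0r.
by rewrite /zop /bump /= subSS subn0 IH eqSS; case: eqP => // _; rewrite lin0.
Qed.

Lemma fexp_zop n v : fexp (zop A) n v = ((n`!)%:R^-1 : K) *: iter n A v.
Proof.
rewrite /fexp big_ord_recr /= big1 ?add0r; first by rewrite fpow_zop eqxx.
by move=> i _; rewrite fpow_zop (gtn_eqF (ltn_ord i)) scaler0.
Qed.

Lemma linear_fexp_zop n : linear (fexp (zop A) n).
Proof. by move=> a x y; rewrite !fexp_zop (linear_iter n lA) scalerDr !scalerA mulrC. Qed.

Lemma fderiv_fexp_zop n v : fderiv (fexp (zop A)) n v = A (fexp (zop A) n v).
Proof. by rewrite /fderiv !fexp_zop scalerA mulrC fact_invS linZ. Qed.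

Lemma fderiv_fexp_zop_r n v : fderiv (fexp (zop A)) n v = fexp (zop A) n (A v).
Proof. by rewrite /fderiv !fexp_zop scalerA mulrC fact_invS iterSr. Qed.

End ExpOfOperator.

Section ConjugatedExponential.
Variables (K : numFieldType) (V : lmodType K) (T S : V -> V).
Hypotheses (lT : linear T) (lS : linear S).

Lemma ad_deriv_exp_conj n v :
  let P := fmul (fexp (zop (fun w => T w + S w))) (fexp (zop (fun w => - T w))) in
  ad_deriv T P n v = S (P n v).
Proof.
move=> P; have lTS := linearD lT lS; have lNT := linearNf lT.
have lP : linear (P n) by apply: linear_fmul => i; apply: linear_fexp_zop.
rewrite /ad_deriv fderiv_fmul; last exact: linear_fexp_zop.
have -> : fmul (fderiv (fexp (zop (fun w => T w + S w))))
               (fexp (zop (fun w => - T w))) n v = T (P n v) + S (P n v).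
  rewrite /P /fmul (lin_sum lTS); apply: eq_bigr => i _; exact: fderiv_fexp_zop.
have -> : fmul (fexp (zop (fun w => T w + S w)))
               (fderiv (fexp (zop (fun w => - T w)))) n v = - P n (T v).
  rewrite /P /fmul -(linN lP); apply: eq_bigr => i _; by rewrite fderiv_fexp_zop_r.
by rewrite /fbracket opprB addrA subrK addrAC subrr add0r.
Qed.

Lemma ad_deriv_eq_uniq (X Z : fps V) :
  (forall v, X 0%N v = v) -> (forall v, Z 0%N v = v) ->
  (forall n v, ad_deriv T X n v = S (X n v)) ->
  (forall n v, ad_deriv T Z n v = S (Z n v)) ->
  forall n v, X n v = Z n v.
Proof.
move=> X0 Z0 eqX eqZ; elim=> [|n IH] v; first by rewrite X0 Z0.
apply: (@scalerI _ _ n.+1%:R); first by rewrite pnatr_eq0.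
move: (eqX n v) (eqZ n v); rewrite /ad_deriv /fbracket /fderiv !IH.
by move=> /eqP; rewrite subr_eq => /eqP -> /eqP; rewrite subr_eq => /eqP ->.
Qed.

Lemma exp_conj_eq_fexp (c : fps V) :
  (forall i, linear (c i)) -> (forall w, c 0%N w = 0) ->
  (forall i w, S (c i w) = c i (S w)) ->
  (forall n w, ad_deriv T c n w = if n == 0%N then S w else 0) ->
  forall n v,
  fmul (fexp (zop (fun w => T w + S w))) (fexp (zop (fun w => - T w))) n v
  = fexp c n v.
Proof.
move=> lc c0 cS ad_deriv_c; apply: ad_deriv_eq_uniq.
- move=> v; rewrite /fmul big_ord1 subn0.
  by rewrite (fexp_zop (linearD lT lS)) (fexp_zop (linearNf lT)) /= invr1 !scale1r.
- by move=> v; rewrite /fexp big_ord1 /= invr1 scale1r.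
- exact: ad_deriv_exp_conj.
- exact: ad_deriv_fexp.
Qed.

End ConjugatedExponential.

Section VertexOperators.
Variables (K : numFieldType) (V : lmodType K).
Variables (Y : V -> int -> V -> V) (vac omega : V) (c : K).
Hypothesis HV : is_VOA Y vac omega c.

Lemma binz0 r : binz K r 0 = 1.
Proof. by rewrite /binz big_ord0 fact0 divr1. Qed.
Lemma binz1 r : binz K r 1 = r%:~R.
Proof. by rewrite /binz big_ord1 divr1 subr0. Qed.
Lemma binz0S i : binz K 0 i.+1 = 0.
Proof. by rewrite /binz big_ord_recl subrr !mul0r. Qed.

Lemma linear_Y u n : linear (Y u n).
Proof. by move=> a x y; rewrite (Y_linr HV). Qed.

Lemma Y0 n w : Y 0 n w = 0.
Proof.
have lYw : linear (fun u => Y u n w) by move=> a x y; rewrite (Y_linl HV).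
exact: lin0 lYw.
Qed.

(* The Borcherds identity with r = 0. *)
Lemma commutator_Y u v w p q : exists M : nat, (3 <= M)%N /\
  Y u p (Y v q w) - Y v q (Y u p w)
  = \sum_(i < M) binz K p i *: Y (Y u i%:Z v) (p + q - i%:Z) w.
Proof.
have [N HN] := Y_borcherds HV u v w p q 0.
exists N.+3; split=> //; rewrite [RHS]HN; last by lia.
rewrite big_ord_recl big1 ?addr0 => [|i _]; last by rewrite binz0S mulr0 scale0r.
by rewrite [_ ^+ _]expr0 [binz _ _ _]binz0 mul1r !scale1r.
Qed.

Variables (h : V) (gamma : rat).
Hypothesis hL : forall n : nat, Y omega (n%:Z + 1) h = if n == 0%N then h else 0.
Hypothesis hh : forall n : nat, Y h n%:Z h = if n == 1%N then ratr gamma *: vac else 0.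

Lemma omega_h k : (0 < k)%N -> Y omega k%:Z h = if k == 1%N then h else 0.
Proof. by case: k => [//|k] _; rewrite -addn1 PoszD hL addn1. Qed.

Lemma commutator_L_h p q w :
  Y omega p (Y h q w) - Y h q (Y omega p w) = (- q)%:~R *: Y h (p + q - 1) w.
Proof.
have [[|[|[|M]]] [//= _ ->]] := commutator_Y omega h w p q.
rewrite !big_ord_recl big1 ?addr0 => [|i _]; last by rewrite omega_h //= Y0 scaler0.
rewrite /bump /= (Y_Lm1 HV) !omega_h //= binz0 binz1 Y0 scaler0 addr0 scale1r.
by rewrite -scalerDl -intrD; congr (_%:~R *: _); lia.
Qed.

Lemma commute_h_h p q w : p + q != 0 -> Y h p (Y h q w) = Y h q (Y h p w).
Proof.
move=> pq0; apply/eqP; rewrite -subr_eq0; apply/eqP.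
have [M [_ ->]] := commutator_Y h h w p q.
apply: big1 => i _; rewrite hh.
case: eqP => [i1|_]; last by rewrite Y0 scaler0.
have lYw : linear (fun u => Y u (p + q - (nat_of_ord i)%:Z) w)
  by move=> a x y; rewrite (Y_linl HV).
rewrite (linZ lYw) (Y_vac HV) i1.
by case: eqP => [/eqP|_]; rewrite ?scaler0 //; move: pq0 => /eqP; lia.
Qed.

(* cf is sum_k a_k h(m k) z^k; the recurrence on a makes ad_deriv L(m) cf = a_1 h(m). *)
Lemma exp_conj_L_h (m : int) (a : nat -> K) (S : V -> V) (cf : fps V) :
  m != 0 ->
  (forall w, S w = a 1%N *: Y h m w) ->
  (forall k w, cf k w = if k == 0%N then 0 else a k *: Y h (m * k%:Z) w) ->
  (forall k, (0 < k)%N -> k.+1%:R * a k.+1 = - (m * k%:Z)%:~R * a k) ->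
  forall n v,
  fmul (fexp (zop (fun w => Y omega (m + 1) w + S w)))
       (fexp (zop (fun w => - Y omega (m + 1) w))) n v
  = fexp cf n v.
Proof.
move=> m0 hS hcf ha; have lY := linear_Y.
have lS : linear S by move=> b x y; rewrite !hS (linearZf _ (lY h m)).
apply: exp_conj_eq_fexp => //.
- move=> i b x y /=; rewrite !hcf.
  by case: (i == 0%N); rewrite ?scaler0 ?addr0 ?(linearZf _ (lY _ _)).
- move=> i w; rewrite hS !hcf; case: eqP => [_|i0]; first by rewrite (lin0 (lY _ _)) scaler0.
  rewrite (linZ (lY _ _)) commute_h_h.
    by rewrite hS (linZ (lY _ _)) !scalerA mulrC.
  by rewrite -{1}[m]mulr1 -mulrDr mulf_neq0 //; lia.
- move=> [|k] w; rewrite /ad_deriv /fderiv /fbracket !hcf /=.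
    by rewrite lin0 // !subr0 scale1r mulr1 hS.
  rewrite (linZ (lY _ _)) -scalerBr commutator_L_h !scalerA.
  have -> : m + 1 + m * k.+1%:Z - 1 = m * k.+2%:Z by lia.
  by rewrite -scalerBl ha // intrN [a _ * _]mulrC subrr scale0r.
Qed.

End VertexOperators.

Theorem lemma3p3 (K : numClosedFieldType) (V : lmodType K)
  (Y : V -> int -> V -> V) (vac omega : V) (c : K)
  (HV : is_VOA Y vac omega c)
  (h : V) (gamma : rat)
  (hL : forall n : nat, Y omega (n%:Z + 1) h = if n == 0%N then h else 0)
  (hh : forall n : nat, Y h n%:Z h = if n == 1%N then ratr gamma *: vac else 0) :
  (forall (n : nat) (v : V),
     fmul (fexp (zop (fun w => Y omega 2 w - Y h 1 w)))
          (fexp (zop (fun w => - Y omega 2 w))) n v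
     = fexp (fun k w => if k == 0%N then 0
                        else ((-1) ^+ k / k%:R : K) *: Y h k%:Z w) n v)
  /\
  (forall (n : nat) (v : V),
     fmul (fexp (zop (fun w => Y omega 0 w + Y h (-1) w)))
          (fexp (zop (fun w => - Y omega 0 w))) n v
     = fexp (fun k w => if k == 0%N then 0
                        else ((k%:R)^-1 : K) *: Y h (- k%:Z) w) n v).
Proof.
split.
- apply: (exp_conj_L_h HV hL hh (m := 1) (a := fun k => (-1) ^+ k / k%:R)) => //.
  + by move=> w; rewrite expr1 divr1 scaleN1r.
  + by move=> k w; rewrite mul1r.
  + move=> k k0; rewrite mul1r -pmulrn exprS; field.
    by rewrite nat1r !pnatr_eq0 -lt0n k0.
- apply: (exp_conj_L_h HV hL hh (m := -1) (a := fun k => k%:R^-1)) => //.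
  + by move=> w; rewrite invr1 scale1r.
  + by move=> k w; rewrite mulN1r.
  + by move=> k k0; rewrite mulN1r intrN opprK -pmulrn !divff // pnatr_eq0 -lt0n.
Qed.
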